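(* Suppose that $D:=\sum_{j=0}^\infty\delta^+(j)<\infty$. Then for every $i\in\mathbb Z_+$, $$\mathbb E_i\exp\Big(\sum_{j=0}^\infty\delta^+(j)\ell(j)\Big)\le\sup_{j\in\mathbb Z_+}\mathbb E_i e^{D\ell(j)}\le\infty;$$ in particular, whenever the right-hand side is finite for every $i$, condition (C) holds and $f(i)\le\sup_{j}\mathbb E_i e^{D\ell(j)}$. If in addition, for every fixed $N\in\mathbb Z_+$, $\mathbb P_i\{X_n>N\text{ for all }n\ge0\}\to1$ as $i\to\infty$, and $\sup_{i\in\mathbb Z_+}\mathbb E_i e^{D\ell(i)}<\infty$, then $\limsup_{i\to\infty}f(i)\le1$.
   Context: Let $\mathbb Z_+=\{0,1,2,\dots\}$. Let $Q$ be a nonnegative transition kernel on $\mathbb Z_+$: $Q(i,j)\ge 0$ and $0<Q(i,\mathbb Z_+):=\sum_{j\ge0}Q(i,j)<\infty$ for every $i$, and $Q$ is irreducible. Let $P(i,j):=Q(i,j)/Q(i,\mathbb Z_+)$ and let $(X_n)_{n\ge0}$ be a Markov chain on $\mathbb Z_+$ with transition matrix $P$; $\mathbb P_i,\mathbb E_i$ denote probability and expectation given $X_0=i$. Let $\delta(j):=\log Q(j,\mathbb Z_+)$, $\delta^+:=\max(\delta,0)$. The local time at $j$ is $\ell(j):=\sum_{n=0}^\infty\mathbf 1\{X_n=j\}$. Condition (C): for every $i$, $\mathbb E_i\prod_{n=0}^\infty \max(Q(X_n,\mathbb Z_+),1)<\infty$ (equivalently $\mathbb E_i\exp(\sum_n\delta^+(X_n))<\infty$).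 Under (C) define $f(i):=\mathbb E_i\prod_{n=0}^\infty Q(X_n,\mathbb Z_+)\in[0,\infty)$. *)

From Stdlib Require Import Reals Lra List.
Import ListNotations.
Open Scope R_scope.

(* A path started at i is written i :: xs, xs = [X_1; ...; X_N].          *)
Fixpoint pw (W : nat -> nat -> R) (x : nat) (xs : list nat) : R :=
  match xs with
  | nil => 1
  | y :: ys => W x y * pw W y ys
  end.

Fixpoint boxsum (N K : nat) (g : list nat -> R) : R :=
  match N with
  | O => g nil
  | S N' => sum_f_R0 (fun k => boxsum N' K (fun xs => g (k :: xs))) K
  end.

(* Transition matrix P(i,j) = Q(i,j)/Q(i,Z+), with q i = Q(i,Z+). *)
Definition Pmat (Q : nat -> nat -> R) (q : nat -> R) : nat -> nat -> R :=
  fun i j => Q i j / q i.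

(* Truncated finite-horizon expectation:
   E_i [ F(X_0,...,X_N) ; X_1,...,X_N <= K ].
   The true finite-horizon expectation E_i F(X_0..X_N) is the (monotone,
   F >= 0) limit/sup of this as K -> infinity. *)
Definition Eb (P : nat -> nat -> R) (F : list nat -> R) (N K i : nat) : R :=
  boxsum N K (fun xs => pw P i xs * F (i :: xs)).

(* For a nonnegative path functional F that is nondecreasing along path
   extensions, "E_i F(X_0, X_1, ...) <= M" (with F(X_0,X_1,...) the monotone
   limit of F(X_0..X_N)) means: every truncated finite-horizon expectation is
   <= M (monotone convergence). *)
Definition Einf_le (P : nat -> nat -> R) (F : list nat -> R) (i : nat) (M : R)
  : Prop := forall N K, Eb P F N K i <= M.

(* "E_i F(X_0..X_N) >= c", i.e. sup_K Eb >= c. *)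
Definition Efin_ge (P : nat -> nat -> R) (F : list nat -> R) (N i : nat) (c : R)
  : Prop := forall c', c' < c -> exists K, c' <= Eb P F N K i.

Fixpoint sumlist (g : nat -> R) (xs : list nat) : R :=
  match xs with nil => 0 | x :: ys => g x + sumlist g ys end.
Fixpoint prodlist (g : nat -> R) (xs : list nat) : R :=
  match xs with nil => 1 | x :: ys => g x * prodlist g ys end.
Fixpoint cnt (j : nat) (xs : list nat) : nat :=
  match xs with nil => O | x :: ys => if Nat.eqb x j then S (cnt j ys) else cnt j ys end.

Definition dplus (q : nat -> R) (j : nat) : R := Rmax (ln (q j)) 0.

Definition Sfun (q : nat -> R) (xs : list nat) : R := exp (sumlist (dplus q) xs).
Definition Lfun (D : R) (j : nat) (xs : list nat) : R := exp (D * INR (cnt j xs)).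
Definition Cfun (q : nat -> R) (xs : list nat) : R := prodlist (fun x => Rmax (q x) 1) xs.
Definition Qprod (q : nat -> R) (xs : list nat) : R := prodlist q xs.
Definition stay_above (N : nat) (xs : list nat) : R :=
  if forallb (fun x => Nat.ltb N x) xs then 1 else 0.

Definition irreducible (Q : nat -> nat -> R) : Prop :=
  forall i j, exists xs, last (i :: xs) i = j /\ 0 < pw Q i xs.

Definition condC (Q : nat -> nat -> R) (q : nat -> R) : Prop :=
  forall i, exists M, Einf_le (Pmat Q q) (Cfun q) i M.

(* f is the function f(i) = E_i prod_{n>=0} Q(X_n,Z+), realised as
   lim_N E_i prod_{n<=N} Q(X_n,Z+)  (dominated convergence under (C)),
   where E_i prod_{n<=N} Q(X_n,Z+) = lim_K (truncated expectation). *)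
Definition is_f (Q : nat -> nat -> R) (q : nat -> R) (f : nat -> R) : Prop :=
  forall i, exists g : nat -> R,
    (forall N, Un_cv (fun K => Eb (Pmat Q q) (Qprod q) N K i) (g N)) /\
    Un_cv g (f i).

(* All expectations are finite-horizon expectations truncated to paths in a
   box [{0..K}^N] ([Eb]); statements about infinite-horizon expectations are
   bounds uniform in [N] and [K].  Writing [d j = delta^+(j)] with
   [sum_j d j = D], the file proceeds as follows.
   - Occupation identity and convexity: [sum_n d(X_n) = sum_j d j l(j)], so
     Jensen's inequality for [exp] with weights [d j / D] gives
     [D exp(sum_j d j l(j)) <= sum_j d j e^{D l(j)}], whence the first
     assertion after taking expectations ([Eb_Sfun_le_sup_Lfun]).
   - Since [prod max(Q(x,Z+),1) = exp(sum delta^+(x))], this also gives (C),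
     and [f(i)] exists: [g_N = E_i prod_{n<=N} Q(X_n,Z+)] has increments
     dominated by those of the nondecreasing bounded
     [a_N = E_i prod_{n<=N} max(Q(X_n,Z+),1)] ([f_value_exists]).
   - For the last assertion, the strong Markov property at the hitting time
     of [j] gives [E_i e^{D l(j)} <= 1 + M P_i(hit j)], and a path staying
     above [N0] hits no [j <= N0]; summing over [j] with Jensen bounds
     [E_i exp(sum d l)] by [1 + M((1 - P_i(stay above N0)) + tail_{N0}/D)]
     ([Eb_Sfun_escape_bound]), which is [<= 1 + eps] for [N0], then [i], large. *)

From Stdlib Require Import Reals List.
From Stdlib Require Import Lra Lia ClassicalEpsilon.
Import ListNotations.
Open Scope R_scope.

Lemma sum_f_R0_le_more (u : nat -> R) n m :
  (n <= m)%nat -> (forall k, 0 <= u k) -> sum_f_R0 u n <= sum_f_R0 u m.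
Proof.
  intros Hnm Hu; induction Hnm as [|m _ IH]; [lra|].
  rewrite tech5; specialize (Hu (S m)); lra.
Qed.

Lemma cv_le_eventually (u : nat -> R) l c :
  Un_cv u l -> (exists K0, forall K, (K0 <= K)%nat -> u K <= c) -> l <= c.
Proof.
  intros Hu [K0 HK]; destruct (Rle_dec l c) as [|Hn]; auto.
  destruct (Hu (l - c)) as [N HN]; [lra|].
  specialize (HN (max N K0) ltac:(lia)); specialize (HK (max N K0) ltac:(lia)).
  unfold Rdist in HN; apply Rabs_def2 in HN; lra.
Qed.

Lemma cv_ge_eventually (u : nat -> R) l c :
  Un_cv u l -> (exists K0, forall K, (K0 <= K)%nat -> c <= u K) -> c <= l.
Proof.
  intros Hu [K0 HK]; destruct (Rle_dec c l) as [|Hn]; auto.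
  destruct (Hu (c - l)) as [N HN]; [lra|].
  specialize (HN (max N K0) ltac:(lia)); specialize (HK (max N K0) ltac:(lia)).
  unfold Rdist in HN; apply Rabs_def2 in HN; lra.
Qed.

Lemma growing_bounded_cv (u : nat -> R) M :
  Un_growing u -> (forall n, u n <= M) -> { l | Un_cv u l }.
Proof. intros Hg Hb; apply growing_cv; auto; exists M; intros x [n ->]; auto. Qed.

Lemma le_of_forall_shrink b c :
  0 <= b -> (forall eta, 0 < eta -> (1 - eta) * b <= c) -> b <= c.
Proof.
  intros Hb H; destruct (Rle_dec b c) as [|Hn]; auto; exfalso.
  set (eta := (b - c) / (2 * (b + 1))).
  assert (He : 0 < eta) by (unfold eta; apply Rdiv_lt_0_compat; lra).
  specialize (H eta He).
  assert (eta * b < b - c).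
  { unfold eta; apply Rmult_lt_reg_l with (2 * (b + 1)); [lra|].
    field_simplify; [nra|lra]. }
  lra.
Qed.

(* A nonnegative sequence whose increments are dominated by those of a
   convergent nondecreasing sequence converges: [g - a] is nonincreasing and
   bounded below. *)
Lemma dominated_increments_cv (g a : nat -> R) A :
  Un_growing a -> Un_cv a A -> (forall n, 0 <= g n) ->
  (forall n, g (S n) <= g n + a (S n) - a n) ->
  exists l, Un_cv g l.
Proof.
  intros Ha HA Hg Hstep.
  assert (Hdec : Un_decreasing (fun n => g n - a n))
    by (intro n; specialize (Hstep n); lra).
  assert (Hlb : has_lb (fun n => g n - a n)).
  { exists A; intros x [n ->]; unfold opp_seq.
    pose proof (growing_ineq a A Ha HA n); specialize (Hg n); lra. }
  destruct (decreasing_cv _ Hdec Hlb) as [h Hh].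
  exists (h + A).
  apply (Un_cv_ext (fun n => (g n - a n) + a n)); [intro n; ring|].
  now apply CV_plus.
Qed.

Lemma sum_indicator (d : nat -> R) x L :
  sum_f_R0 (fun j => d j * (if Nat.eqb x j then 1 else 0)) L =
  if Nat.leb x L then d x else 0.
Proof.
  induction L as [|L IH]; simpl.
  - destruct x; simpl; ring.
  - rewrite IH.
    destruct (Nat.leb x L) eqn:E1; destruct (Nat.eqb x (S L)) eqn:E2;
    destruct (Nat.leb x (S L)) eqn:E3;
    apply Nat.leb_le in E1 || apply Nat.leb_gt in E1;
    apply Nat.eqb_eq in E2 || apply Nat.eqb_neq in E2;
    apply Nat.leb_le in E3 || apply Nat.leb_gt in E3; try lia; subst; ring.
Qed.

Lemma sum_tail (d : nat -> R) N0 L : (N0 <= L)%nat ->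
  sum_f_R0 (fun j => if Nat.leb j N0 then 0 else d j) L = sum_f_R0 d L - sum_f_R0 d N0.
Proof.
  intro H; induction H as [|m Hm IH].
  - transitivity (sum_f_R0 (fun _ => 0) N0); [|rewrite sum_cte; ring].
    apply sum_eq; intros j Hj.
    replace (Nat.leb j N0) with true; auto; symmetry; apply Nat.leb_le; auto.
  - rewrite !tech5, IH; cbv beta.
    destruct (Nat.leb (S m) N0) eqn:E; [apply Nat.leb_le in E; lia | ring].
Qed.

Lemma boxsum_ext N K (g h : list nat -> R) :
  (forall xs, g xs = h xs) -> boxsum N K g = boxsum N K h.
Proof.
  revert g h; induction N as [|N IH]; intros g h H; simpl; auto.
  apply sum_eq; intros k _; apply IH; auto.
Qed.

Lemma boxsum_mono N K (g h : list nat -> R) :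
  (forall xs, Forall (fun x => (x <= K)%nat) xs -> g xs <= h xs) ->
  boxsum N K g <= boxsum N K h.
Proof.
  revert g h; induction N as [|N IH]; intros g h H; simpl.
  - apply H; constructor.
  - apply sum_Rle; intros k Hk; apply IH; intros xs Hxs; apply H; constructor; auto.
Qed.

Lemma boxsum_plus N K (g h : list nat -> R) :
  boxsum N K (fun xs => g xs + h xs) = boxsum N K g + boxsum N K h.
Proof.
  revert g h; induction N as [|N IH]; intros g h; simpl; auto.
  rewrite <- sum_plus; apply sum_eq; intros k _; apply IH.
Qed.

Lemma boxsum_scal N K c (g : list nat -> R) :
  boxsum N K (fun xs => c * g xs) = c * boxsum N K g.
Proof.
  revert g; induction N as [|N IH]; intros g; simpl; auto.
  rewrite scal_sum; apply sum_eq; intros k _; rewrite IH; ring.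
Qed.

Section TruncatedExpectation.

Variable P : nat -> nat -> R.

Lemma Eb_ext F G N K i :
  (forall xs, F (i :: xs) = G (i :: xs)) -> Eb P F N K i = Eb P G N K i.
Proof. intro H; unfold Eb; apply boxsum_ext; intro xs; rewrite H; auto. Qed.

Lemma Eb_S F N K i :
  Eb P F (S N) K i = sum_f_R0 (fun k => P i k * Eb P (fun p => F (i :: p)) N K k) K.
Proof.
  unfold Eb; simpl; apply sum_eq; intros k _.
  rewrite <- boxsum_scal; apply boxsum_ext; intro xs; simpl; ring.
Qed.

Lemma Eb_snoc N : forall F K i,
  Eb P F (S N) K i =
  Eb P (fun p => sum_f_R0 (fun k => P (last p 0%nat) k * F (p ++ [k])) K) N K i.
Proof.
  induction N as [|N IH]; intros F K i.
  - rewrite Eb_S; unfold Eb; simpl; rewrite Rmult_1_l; apply sum_eq; intros k _; ring.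
  - rewrite Eb_S, (Eb_S _ N K i); apply sum_eq; intros k _.
    f_equal; rewrite IH; apply Eb_ext; reflexivity.
Qed.

Lemma Eb_plus F G N K i :
  Eb P (fun p => F p + G p) N K i = Eb P F N K i + Eb P G N K i.
Proof. unfold Eb; rewrite <- boxsum_plus; apply boxsum_ext; intros; ring. Qed.

Lemma Eb_scal c F N K i : Eb P (fun p => c * F p) N K i = c * Eb P F N K i.
Proof. unfold Eb; rewrite <- boxsum_scal; apply boxsum_ext; intros; ring. Qed.

Lemma Eb_opp F N K i : Eb P (fun p => - F p) N K i = - Eb P F N K i.
Proof.
  replace (- Eb P F N K i) with (-1 * Eb P F N K i) by ring.
  rewrite <- Eb_scal; apply Eb_ext; intros; ring.
Qed.

Lemma Eb_zero N K i : Eb P (fun _ => 0) N K i = 0.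
Proof.
  transitivity (Eb P (fun _ => 0 * 0) N K i); [apply Eb_ext; intros; ring|].
  rewrite Eb_scal; ring.
Qed.

Lemma Eb_sum (h : nat -> list nat -> R) L N K i :
  Eb P (fun p => sum_f_R0 (fun j => h j p) L) N K i = sum_f_R0 (fun j => Eb P (h j) N K i) L.
Proof.
  induction L as [|L IH]; simpl; [apply Eb_ext; auto|].
  rewrite Eb_plus, IH; auto.
Qed.

Hypothesis HP : forall i j, 0 <= P i j.

Lemma pw_nonneg x xs : 0 <= pw P x xs.
Proof.
  revert x; induction xs as [|y ys IH]; intros x; simpl; [lra|].
  apply Rmult_le_pos; auto.
Qed.

Lemma Eb_mono F G N K i :
  (forall xs, Forall (fun x => (x <= K)%nat) xs -> F (i :: xs) <= G (i :: xs)) ->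
  Eb P F N K i <= Eb P G N K i.
Proof.
  intro H; unfold Eb; apply boxsum_mono; intros xs Hxs.
  apply Rmult_le_compat_l; [apply pw_nonneg | auto].
Qed.

Lemma Eb_nonneg F N K i : (forall p, 0 <= F p) -> 0 <= Eb P F N K i.
Proof. intro H; rewrite <- (Eb_zero N K i); apply Eb_mono; auto. Qed.

Lemma Eb_monoK N : forall F K K' i,
  (forall p, 0 <= F p) -> (K <= K')%nat -> Eb P F N K i <= Eb P F N K' i.
Proof.
  induction N as [|N IH]; intros F K K' i HF HK.
  - unfold Eb; simpl; lra.
  - rewrite !Eb_S.
    apply Rle_trans with (sum_f_R0 (fun k => P i k * Eb P (fun p => F (i :: p)) N K' k) K).
    + apply sum_Rle; intros k _; apply Rmult_le_compat_l; auto.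
    + apply sum_f_R0_le_more; auto; intro k; apply Rmult_le_pos; auto.
      apply Eb_nonneg; auto.
Qed.

Hypothesis Hrow : forall i K, sum_f_R0 (P i) K <= 1.

Lemma Eb_one_le N : forall K i, Eb P (fun _ => 1) N K i <= 1.
Proof.
  induction N as [|N IH]; intros K i.
  - unfold Eb; simpl; lra.
  - rewrite Eb_S; apply Rle_trans with (sum_f_R0 (P i) K); [|auto].
    apply sum_Rle; intros k _.
    rewrite <- (Rmult_1_r (P i k)) at 2; apply Rmult_le_compat_l; auto.
Qed.

End TruncatedExpectation.

Lemma dplus_nonneg q j : 0 <= dplus q j.
Proof. unfold dplus; apply Rmax_r. Qed.

Lemma D_nonneg q D : infinite_sum (dplus q) D -> 0 <= D.
Proof.
  intro H; apply Rle_trans with (sum_f_R0 (dplus q) 0).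
  - simpl; apply dplus_nonneg.
  - apply sum_incr; auto; apply dplus_nonneg.
Qed.

Lemma sumlist_cnt (d : nat -> R) L p : Forall (fun x => (x <= L)%nat) p ->
  sumlist d p = sum_f_R0 (fun j => d j * INR (cnt j p)) L.
Proof.
  induction p as [|x p IH]; intro H; simpl.
  - transitivity (sum_f_R0 (fun _ => 0) L); [rewrite sum_cte; ring|].
    apply sum_eq; intros; simpl; ring.
  - inversion H; subst; rewrite IH by auto.
    transitivity (sum_f_R0 (fun j => d j * INR (cnt j p) + d j * (if Nat.eqb x j then 1 else 0)) L).
    + rewrite sum_plus, sum_indicator.
      replace (Nat.leb x L) with true by (symmetry; apply Nat.leb_le; auto); ring.
    + apply sum_eq; intros j _; destruct (Nat.eqb x j); [rewrite S_INR|]; ring.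
Qed.

(* Jensen's inequality for [exp] with subprobability weights [d j / D],
   the missing mass being put at [0]. *)
Lemma exp_jensen (d c : nat -> R) L D :
  (forall j, 0 <= d j) -> sum_f_R0 d L <= D ->
  D * exp (sum_f_R0 (fun j => d j * c j) L) <=
  sum_f_R0 (fun j => d j * exp (D * c j)) L + (D - sum_f_R0 d L).
Proof.
  intros Hd HS; set (t := sum_f_R0 (fun j => d j * c j) L); set (S := sum_f_R0 d L).
  (* the tangent line of [exp] at [t] lies below [exp] *)
  assert (tangent : forall y, exp t * (1 + y - t) <= exp y).
  { intro y; replace (exp y) with (exp t * exp (y - t)).
    - apply Rmult_le_compat_l; [left; apply exp_pos|].
      pose proof (exp_ineq1_le (y - t)); lra.
    - rewrite <- exp_plus; f_equal; ring. }
  assert (Htangent_sum : sum_f_R0 (fun j => d j * (exp t * (1 + D * c j - t))) L <=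
               sum_f_R0 (fun j => d j * exp (D * c j)) L)
    by (apply sum_Rle; intros; apply Rmult_le_compat_l; auto).
  assert (Hlinear : sum_f_R0 (fun j => d j * (exp t * (1 + D * c j - t))) L =
               exp t * (1 - t) * S + exp t * D * t).
  { unfold S, t; rewrite !scal_sum, <- sum_plus; apply sum_eq; intros; ring. }
  assert (Hmissing : (D - S) * (exp t * (1 + 0 - t)) <= (D - S) * exp 0)
    by (apply Rmult_le_compat_l; [unfold S; lra | apply tangent]).
  rewrite exp_0 in Hmissing; nra.
Qed.

Lemma prodlist_app (g : nat -> R) p r : prodlist g (p ++ r) = prodlist g p * prodlist g r.
Proof. induction p as [|x p IH]; simpl; [ring | rewrite IH; ring]. Qed.

Lemma Cfun_Sfun q (Hq : forall i, 0 < q i) p : Cfun q p = Sfun q p.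
Proof.
  unfold Cfun, Sfun; induction p as [|x p IH]; simpl; [rewrite exp_0; auto|].
  rewrite exp_plus, IH; f_equal; unfold dplus.
  destruct (Rle_dec 1 (q x)) as [H|H].
  - rewrite Rmax_left by auto; rewrite Rmax_left; [rewrite exp_ln; auto|].
    destruct H as [H|H]; [left; rewrite <- ln_1; apply ln_increasing; lra|].
    rewrite <- H, ln_1; lra.
  - rewrite Rmax_right by lra; rewrite Rmax_right; [symmetry; apply exp_0|].
    left; rewrite <- ln_1; apply ln_increasing; auto; lra.
Qed.

Lemma Qprod_nonneg q (Hq : forall i, 0 < q i) p : 0 <= Qprod q p.
Proof. unfold Qprod; induction p as [|x p IH]; simpl; [lra|]; specialize (Hq x); nra. Qed.

Lemma Cfun_ge1 q p : 1 <= Cfun q p.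
Proof. unfold Cfun; induction p as [|x p IH]; simpl; [lra|]; pose proof (Rmax_r (q x) 1); nra. Qed.

Lemma Qprod_le_Cfun q (Hq : forall i, 0 < q i) p : Qprod q p <= Cfun q p.
Proof.
  unfold Qprod, Cfun; induction p as [|x p IH]; simpl; [lra|].
  apply Rmult_le_compat; [left; auto | apply Qprod_nonneg; auto | apply Rmax_l | auto].
Qed.

Lemma Cfun_snoc q p k : Cfun q (p ++ [k]) = Cfun q p * Rmax (q k) 1.
Proof. unfold Cfun; rewrite prodlist_app; simpl; ring. Qed.

Lemma Qprod_snoc q p k : Qprod q (p ++ [k]) = Qprod q p * q k.
Proof. unfold Qprod; rewrite prodlist_app; simpl; ring. Qed.

Lemma Lfun_ge1 D j p : 0 <= D -> 1 <= Lfun D j p.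
Proof.
  intro HD; unfold Lfun; rewrite <- exp_0.
  assert (0 <= D * INR (cnt j p)) by (apply Rmult_le_pos; auto; apply pos_INR).
  destruct (Req_dec (D * INR (cnt j p)) 0) as [-> | Hne]; [lra|].
  left; apply exp_increasing; lra.
Qed.

Lemma Sfun_D0 q D : infinite_sum (dplus q) D -> D = 0 -> forall p, Sfun q p = 1.
Proof.
  intros H HD0 p; unfold Sfun; rewrite <- exp_0; f_equal.
  assert (Hz : forall j, dplus q j = 0).
  { intro j; apply Rle_antisym; [|apply dplus_nonneg].
    apply Rle_trans with (sum_f_R0 (dplus q) j).
    - destruct j; simpl; [lra|].
      pose proof (cond_pos_sum (dplus q) j (dplus_nonneg q)); lra.
    - rewrite <- HD0; apply sum_incr; auto; apply dplus_nonneg. }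
  induction p as [|x p IH]; simpl; auto; rewrite Hz, IH; ring.
Qed.

Lemma stay_above_bounds N0 p : 0 <= stay_above N0 p <= 1.
Proof. unfold stay_above; destruct forallb; lra. Qed.

(* Jensen's inequality inside the expectation, with the sites truncated at
   [max i K], beyond which a path in the box never goes. *)
Lemma Eb_Sfun_jensen q P D (HP : forall i j, 0 <= P i j) (HD : infinite_sum (dplus q) D) N K i :
  D * Eb P (Sfun q) N K i <=
  sum_f_R0 (fun j => dplus q j * Eb P (Lfun D j) N K i) (max i K) +
  (D - sum_f_R0 (dplus q) (max i K)) * Eb P (fun _ => 1) N K i.
Proof.
  set (L := max i K); set (SL := sum_f_R0 (dplus q) L).
  rewrite <- Eb_scal.
  apply Rle_trans with
    (Eb P (fun p => sum_f_R0 (fun j => dplus q j * Lfun D j p) L + (D - SL) * 1) N K i).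
  - apply Eb_mono; auto; intros xs Hxs.
    assert (HF : Forall (fun x => (x <= L)%nat) (i :: xs)).
    { constructor; [unfold L; lia|].
      eapply Forall_impl; [|exact Hxs]; intros a Ha; simpl in Ha; unfold L; lia. }
    unfold Sfun; rewrite (sumlist_cnt _ L _ HF), Rmult_1_r; unfold Lfun, SL.
    apply (exp_jensen (dplus q) (fun j => INR (cnt j (i :: xs)))); [apply dplus_nonneg|].
    apply sum_incr; auto; apply dplus_nonneg.
  - rewrite Eb_plus, Eb_sum, Eb_scal; right; f_equal.
    apply sum_eq; intros; rewrite Eb_scal; auto.
Qed.

Lemma Eb_Sfun_le_sup_Lfun q P D (HP : forall i j, 0 <= P i j)
  (HD : infinite_sum (dplus q) D) N K i M :
  (forall j, Eb P (Lfun D j) N K i <= M) -> Eb P (Sfun q) N K i <= M.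
Proof.
  intros HM; pose proof (D_nonneg q D HD) as HD0.
  assert (Hmass : Eb P (fun _ => 1) N K i <= M).
  { apply Rle_trans with (Eb P (Lfun D 0) N K i); auto.
    apply Eb_mono; auto; intros; apply Lfun_ge1; auto. }
  destruct HD0 as [HDp | HD0].
  - pose proof (Eb_Sfun_jensen q P D HP HD N K i) as J; set (L := max i K) in J.
    assert (Hs : sum_f_R0 (fun j => dplus q j * Eb P (Lfun D j) N K i) L
                 <= sum_f_R0 (dplus q) L * M).
    { rewrite Rmult_comm, scal_sum; apply sum_Rle; intros.
      apply Rmult_le_compat_l; auto; apply dplus_nonneg. }
    assert (HSL : sum_f_R0 (dplus q) L <= D) by (apply sum_incr; auto; apply dplus_nonneg).
    assert ((D - sum_f_R0 (dplus q) L) * Eb P (fun _ => 1) N K i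
            <= (D - sum_f_R0 (dplus q) L) * M) by (apply Rmult_le_compat_l; lra).
    apply Rmult_le_reg_l with D; auto; lra.
  - rewrite (Eb_ext P (Sfun q) (fun _ => 1)); auto.
    intros; apply Sfun_D0 with D; auto.
Qed.

(* [hitb P j N K i]: truncated probability that the chain started at [i]
   visits [j] at one of the times [1..N]. *)
Fixpoint hitb (P : nat -> nat -> R) (j N K i : nat) : R :=
  match N with
  | O => 0
  | S N' => sum_f_R0 (fun k => P i k * (if Nat.eqb k j then 1 else hitb P j N' K k)) K
  end.

Section Hitting.

Variable P : nat -> nat -> R.
Hypothesis HP : forall i j, 0 <= P i j.
Hypothesis Hrow : forall i K, sum_f_R0 (P i) K <= 1.

(* Strong Markov property at the hitting time of [j]: before it [l(j) = 0],
   after it the chain restarts from [j]; hence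
   [E_i e^{D l(j)} <= 1 + (sup E_j e^{D l(j)}) P_i(hit j)] for [i <> j]. *)
Lemma Eb_Lfun_le_hit D j M K (HD : 0 <= D) (HM : 0 <= M)
  (Hj : forall N' K', Eb P (Lfun D j) N' K' j <= M) :
  forall N i, i <> j -> Eb P (Lfun D j) N K i <= 1 + M * hitb P j N K i.
Proof.
  induction N as [|N IH]; intros i Hij.
  - unfold Eb, Lfun; simpl.
    replace (Nat.eqb i j) with false by (symmetry; apply Nat.eqb_neq; auto).
    simpl; rewrite Rmult_0_r, exp_0; lra.
  - rewrite Eb_S; simpl hitb.
    apply Rle_trans with (sum_f_R0 (fun k => P i k * 1
        + M * (P i k * (if Nat.eqb k j then 1 else hitb P j N K k))) K).
    + apply sum_Rle; intros k _.
      rewrite (Eb_ext P _ (Lfun D j)).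
      2:{ intros xs; unfold Lfun; simpl.
          replace (Nat.eqb i j) with false by (symmetry; apply Nat.eqb_neq; auto); auto. }
      specialize (HP i k).
      destruct (Nat.eqb k j) eqn:E.
      * apply Nat.eqb_eq in E; subst k.
        assert (P i j * Eb P (Lfun D j) N K j <= P i j * M)
          by (apply Rmult_le_compat_l; auto).
        nra.
      * apply Nat.eqb_neq in E; specialize (IH k E).
        assert (P i k * Eb P (Lfun D j) N K k <= P i k * (1 + M * hitb P j N K k))
          by (apply Rmult_le_compat_l; auto).
        nra.
    + set (X := fun k => P i k * (if Nat.eqb k j then 1 else hitb P j N K k)).
      assert (sum_f_R0 (fun k => M * X k) K = M * sum_f_R0 X K)
        by (rewrite scal_sum; apply sum_eq; intros; ring).
      assert (sum_f_R0 (fun k => P i k * 1) K = sum_f_R0 (P i) K)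
        by (apply sum_eq; intros; ring).
      rewrite sum_plus; specialize (Hrow i K); unfold X in *; lra.
Qed.

(* A site [j <= N0] cannot be hit by a path staying above [N0]:
   [P_i(hit j) + P_i(stay above N0) <= 1]. *)
Lemma hit_plus_stay_le1 j N0 K (HjN : (j <= N0)%nat) :
  forall N i, i <> j -> hitb P j N K i + Eb P (stay_above N0) N K i <= 1.
Proof.
  induction N as [|N IH]; intros i Hij.
  - unfold Eb, stay_above; simpl; destruct (Nat.ltb N0 i); simpl; lra.
  - rewrite Eb_S; simpl hitb; rewrite <- sum_plus.
    apply Rle_trans with (sum_f_R0 (P i) K); auto.
    apply sum_Rle; intros k _.
    assert (Hst : Eb P (fun p => stay_above N0 (i :: p)) N K k <= Eb P (stay_above N0) N K k).
    { apply Eb_mono; auto; intros xs _; unfold stay_above.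
      change (forallb (fun x => Nat.ltb N0 x) (i :: k :: xs)) with
        (andb (Nat.ltb N0 i) (forallb (fun x => Nat.ltb N0 x) (k :: xs))).
      destruct (Nat.ltb N0 i); destruct (forallb _ (k :: xs)); simpl; lra. }
    pose proof (HP i k) as HPik.
    destruct (Nat.eqb k j) eqn:E.
    + apply Nat.eqb_eq in E; subst k.
      assert (Hz : Eb P (stay_above N0) N K j <= 0).
      { rewrite <- (Eb_zero P N K j); apply Eb_mono; auto; intros xs _.
        unfold stay_above; simpl.
        replace (Nat.ltb N0 j) with false by (symmetry; apply Nat.ltb_ge; auto).
        simpl; lra. }
      assert (P i j * Eb P (fun p => stay_above N0 (i :: p)) N K j <= P i j * 0)
        by (apply Rmult_le_compat_l; lra).
      lra.
    + apply Nat.eqb_neq in E; specialize (IH k E).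
      assert (P i k * Eb P (fun p => stay_above N0 (i :: p)) N K k
              <= P i k * Eb P (stay_above N0) N K k) by (apply Rmult_le_compat_l; lra).
      nra.
Qed.

(* Starting far out ([i > N0]), the local time at any site is controlled
   by the probability [T] of staying above [N0]; sites [j > N0] only get
   the trivial bound. *)
Lemma Eb_Lfun_escape D M (HD : 0 <= D) (HM : 0 <= M)
  (Hdiag : forall j N K, Eb P (Lfun D j) N K j <= M) N0 N K i (HiN0 : (N0 < i)%nat) j :
  Eb P (Lfun D j) N K i <=
  1 + M * (1 - Eb P (stay_above N0) N K i) + (if Nat.leb j N0 then 0 else M).
Proof.
  set (T := Eb P (stay_above N0) N K i).
  assert (HT : 0 <= T <= 1).
  { split; [apply Eb_nonneg; auto; apply stay_above_bounds|].
    eapply Rle_trans; [|apply (Eb_one_le P HP Hrow N K i)].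
    apply Eb_mono; auto; intros; apply stay_above_bounds. }
  assert (HMT : 0 <= M * (1 - T)) by (apply Rmult_le_pos; lra).
  destruct (Nat.eq_dec i j) as [<- | Hij].
  - replace (Nat.leb i N0) with false by (symmetry; apply Nat.leb_gt; lia).
    specialize (Hdiag i N K); lra.
  - pose proof (Eb_Lfun_le_hit D j M K HD HM (fun N' K' => Hdiag j N' K') N i Hij) as Hhit.
    destruct (Nat.leb j N0) eqn:Ej.
    + apply Nat.leb_le in Ej.
      pose proof (hit_plus_stay_le1 j N0 K Ej N i Hij).
      assert (M * hitb P j N K i <= M * (1 - T)) by (apply Rmult_le_compat_l; unfold T in *; lra).
      lra.
    + pose proof (hit_plus_stay_le1 j j K (le_n j) N i Hij).
      pose proof (Eb_nonneg P HP (stay_above j) N K i (fun p => proj1 (stay_above_bounds j p))).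
      assert (M * hitb P j N K i <= M * 1) by (apply Rmult_le_compat_l; lra).
      lra.
Qed.

End Hitting.

Lemma Eb_Sfun_escape_bound P (HP : forall i j, 0 <= P i j)
  (Hrow : forall i K, sum_f_R0 (P i) K <= 1)
  q D M (HD : infinite_sum (dplus q) D) (HM : 0 <= M)
  (Hdiag : forall j N K, Eb P (Lfun D j) N K j <= M) N0 N K i (HiN0 : (N0 < i)%nat) :
  D * Eb P (Sfun q) N K i <=
  D + M * ((1 - Eb P (stay_above N0) N K i) * D + (D - sum_f_R0 (dplus q) N0)).
Proof.
  pose proof (D_nonneg q D HD) as HD0.
  pose proof (Eb_Sfun_jensen q P D HP HD N K i) as J.
  set (L := max i K) in J; set (T := Eb P (stay_above N0) N K i).
  set (SL := sum_f_R0 (dplus q) L); set (SN0 := sum_f_R0 (dplus q) N0).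
  assert (HT : 0 <= T <= 1).
  { split; [apply Eb_nonneg; auto; apply stay_above_bounds|].
    eapply Rle_trans; [|apply (Eb_one_le P HP Hrow N K i)].
    apply Eb_mono; auto; intros; apply stay_above_bounds. }
  assert (Hmass : Eb P (fun _ => 1) N K i <= 1) by (apply Eb_one_le; auto).
  assert (HSL : SL <= D) by (apply sum_incr; auto; apply dplus_nonneg).
  assert (HSN0 : SN0 <= SL) by (apply sum_f_R0_le_more; [unfold L; lia | apply dplus_nonneg]).
  assert (Hsum : sum_f_R0 (fun j => dplus q j * Eb P (Lfun D j) N K i) L
                 <= (1 + M * (1 - T)) * SL + M * (SL - SN0)).
  { eapply Rle_trans with (sum_f_R0 (fun j => dplus q j * (1 + M * (1 - T))
                            + (if Nat.leb j N0 then 0 else dplus q j) * M) L).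
    - apply sum_Rle; intros j _; pose proof (dplus_nonneg q j) as Hdj.
      pose proof (Eb_Lfun_escape P HP Hrow D M HD0 HM Hdiag N0 N K i HiN0 j) as HE.
      apply (Rmult_le_compat_l (dplus q j)) in HE; auto.
      destruct (Nat.leb j N0); fold T in HE; nra.
    - rewrite sum_plus, <- !scal_sum.
      rewrite sum_tail by (unfold L; lia).
      right; unfold SL, SN0; ring. }
  assert ((D - SL) * Eb P (fun _ => 1) N K i <= (D - SL) * 1)
    by (apply Rmult_le_compat_l; lra).
  assert (M * (1 - T) * SL <= M * (1 - T) * D)
    by (apply Rmult_le_compat_l; [apply Rmult_le_pos|]; lra).
  assert (M * SL <= M * D) by (apply Rmult_le_compat_l; lra).
  unfold SL in *; lra.
Qed.

Lemma Eb_limit_exists P (HP : forall i j, 0 <= P i j) F N i M :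
  (forall p, 0 <= F p) -> (forall K, Eb P F N K i <= M) ->
  { l | Un_cv (fun K => Eb P F N K i) l }.
Proof.
  intros HF HM; apply (growing_bounded_cv _ M); auto.
  intro K; apply Eb_monoK; auto.
Qed.

Lemma Eb_le_limit P (HP : forall i j, 0 <= P i j) F N K i l :
  (forall p, 0 <= F p) -> Un_cv (fun K => Eb P F N K i) l -> Eb P F N K i <= l.
Proof.
  intros HF Hl; apply (growing_ineq (fun K => Eb P F N K i)); auto.
  intro K'; apply Eb_monoK; auto.
Qed.

Lemma last_le i K xs :
  Forall (fun x => (x <= K)%nat) xs -> (last (i :: xs) 0%nat <= max i K)%nat.
Proof.
  revert i; induction xs as [|x xs IH]; intros i H; simpl; [lia|].
  inversion H as [|y ys Hy Hys]; subst; specialize (IH x Hys); simpl in IH; destruct xs; lia.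
Qed.

Lemma Cfun_nonneg q p : 0 <= Cfun q p.
Proof. pose proof (Cfun_ge1 q p); lra. Qed.

Definition mass (P : nat -> nat -> R) (K : nat) (p : list nat) : R :=
  sum_f_R0 (P (last p 0%nat)) K.

Section NormalizedKernel.

Variables (Q : nat -> nat -> R) (q : nat -> R).
Hypothesis HQnn : forall i j, 0 <= Q i j.
Hypothesis Hq : forall i, infinite_sum (fun j => Q i j) (q i).
Hypothesis Hqpos : forall i, 0 < q i.

Local Notation P := (Pmat Q q).

Lemma Pmat_nonneg i j : 0 <= P i j.
Proof. unfold Pmat, Rdiv; apply Rmult_le_pos; auto; left; apply Rinv_0_lt_compat; auto. Qed.

Lemma Pmat_partial_row x K : sum_f_R0 (P x) K = sum_f_R0 (fun j => Q x j) K / q x.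
Proof. unfold Rdiv; rewrite Rmult_comm, scal_sum; apply sum_eq; intros; unfold Pmat, Rdiv; ring. Qed.

Lemma Pmat_row i K : sum_f_R0 (P i) K <= 1.
Proof.
  rewrite Pmat_partial_row; apply Rmult_le_reg_l with (q i); auto.
  unfold Rdiv; rewrite Rmult_1_r; field_simplify; [|specialize (Hqpos i); lra].
  apply sum_incr; [apply Hq | intro; apply HQnn].
Qed.

Lemma Pmat_row_cv L eta : 0 < eta ->
  exists K2, forall K x, (K2 <= K)%nat -> (x <= L)%nat -> 1 - eta <= sum_f_R0 (P x) K.
Proof.
  intros Heta.
  assert (Hone : forall x, exists Kx, forall K, (Kx <= K)%nat -> 1 - eta <= sum_f_R0 (P x) K).
  { intro x; specialize (Hqpos x).
    destruct (Hq x (eta * q x)) as [Kx HKx]; [apply Rmult_lt_0_compat; lra|].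
    exists Kx; intros K HK; specialize (HKx K HK).
    unfold Rdist in HKx; apply Rabs_def2 in HKx.
    rewrite Pmat_partial_row; apply Rmult_le_reg_l with (q x); auto.
    unfold Rdiv; field_simplify; [nra | lra]. }
  induction L as [|L [K1 HK1]].
  - destruct (Hone 0%nat) as [K0 HK0]; exists K0; intros K x HK Hx.
    replace x with 0%nat by lia; auto.
  - destruct (Hone (S L)) as [K2 HK2]; exists (max K1 K2); intros K x HK Hx.
    destruct (Nat.eq_dec x (S L)) as [-> | Hne]; [apply HK2 | apply HK1]; lia.
Qed.


Lemma Eb_mass_approx F N i K1 eta : (forall p, 0 <= F p) -> 0 < eta ->
  exists K2, forall K, (K2 <= K)%nat ->
    (1 - eta) * Eb P F N K1 i <= Eb P (fun p => mass P K p * F p) N K i.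
Proof.
  intros HF Heta.
  destruct (Pmat_row_cv (max i K1) eta Heta) as [K2 HK2].
  exists (max K1 K2); intros K HK; rewrite <- Eb_scal.
  apply Rle_trans with (Eb P (fun p => mass P K p * F p) N K1 i).
  - apply Eb_mono; [exact Pmat_nonneg|]; intros xs Hxs; apply Rmult_le_compat_r; auto.
    apply HK2; [lia | apply last_le; auto].
  - apply Eb_monoK; [exact Pmat_nonneg| |lia]; intro p; apply Rmult_le_pos; auto.
    apply cond_pos_sum; intro; apply Pmat_nonneg.
Qed.

Lemma Eb_Cfun_extend N K i :
  Eb P (fun p => mass P K p * Cfun q p) N K i <= Eb P (Cfun q) (S N) K i.
Proof.
  rewrite Eb_snoc; apply Eb_mono; [exact Pmat_nonneg|]; intros xs _.
  unfold mass; rewrite Rmult_comm, scal_sum; apply sum_Rle; intros k _.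
  rewrite Cfun_snoc; apply Rmult_le_compat_l; [apply Pmat_nonneg|].
  pose proof (Cfun_ge1 q (i :: xs)); pose proof (Rmax_r (q k) 1); nra.
Qed.

(* One more factor [q(X_{N+1})] raises [Qprod] by at most the increase of
   [Cfun]: pointwise [Qp (q - 1) <= Cp (max(q,1) - 1)]. *)
Lemma Eb_Qprod_extend N K i :
  Eb P (Qprod q) (S N) K i <=
  Eb P (Qprod q) N K i + Eb P (Cfun q) (S N) K i - Eb P (fun p => mass P K p * Cfun q p) N K i.
Proof.
  rewrite !Eb_snoc.
  apply Rle_trans with (Eb P (fun p => mass P K p * Qprod q p +
      (sum_f_R0 (fun k => P (last p 0%nat) k * Cfun q (p ++ [k])) K
       + - (mass P K p * Cfun q p))) N K i).
  - apply Eb_mono; [exact Pmat_nonneg|]; intros xs _; set (p := i :: xs).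
    unfold mass; rewrite !(Rmult_comm (sum_f_R0 _ K)), !scal_sum.
    match goal with |- _ <= ?a + (?b + - ?c) => change (a + (b + - c)) with (a + (b - c)) end.
    rewrite <- minus_sum, <- sum_plus; apply sum_Rle; intros k _.
    rewrite Qprod_snoc, Cfun_snoc.
    pose proof (Qprod_le_Cfun q Hqpos p); pose proof (Qprod_nonneg q Hqpos p).
    pose proof (Rmax_l (q k) 1); pose proof (Rmax_r (q k) 1).
    assert (Hpt : Qprod q p * (q k - 1) <= Cfun q p * (Rmax (q k) 1 - 1)) by nra.
    apply (Rmult_le_compat_l (P (last p 0%nat) k)) in Hpt; [lra | apply Pmat_nonneg].
  - rewrite !Eb_plus, Eb_opp.
    assert (Eb P (fun p => mass P K p * Qprod q p) N K i <= Eb P (Qprod q) N K i).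
    { apply Eb_mono; [exact Pmat_nonneg|]; intros xs _.
      pose proof (Qprod_nonneg q Hqpos (i :: xs)); pose proof (Pmat_row (last (i :: xs) 0%nat) K).
      pose proof (cond_pos_sum (P (last (i :: xs) 0%nat)) K (Pmat_nonneg _)).
      unfold mass; nra. }
    lra.
Qed.

Section FixedStart.

Variable i : nat.

Lemma Cfun_limit_growing N a a' :
  Un_cv (fun K => Eb P (Cfun q) N K i) a ->
  Un_cv (fun K => Eb P (Cfun q) (S N) K i) a' -> a <= a'.
Proof.
  intros Ha Ha'; apply (cv_le_eventually _ _ _ Ha); exists 0%nat; intros K1 _.
  apply le_of_forall_shrink; [apply Eb_nonneg; [exact Pmat_nonneg | apply Cfun_nonneg]|].
  intros eta Heta.
  destruct (Eb_mass_approx (Cfun q) N i K1 eta (Cfun_nonneg q) Heta) as [K2 HK2].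
  apply (cv_ge_eventually _ _ _ Ha'); exists K2; intros K HK.
  eapply Rle_trans; [apply (HK2 K HK) | apply Eb_Cfun_extend].
Qed.

Lemma Qprod_limit_step N g g' a a' :
  Un_cv (fun K => Eb P (Qprod q) N K i) g ->
  Un_cv (fun K => Eb P (Qprod q) (S N) K i) g' ->
  Un_cv (fun K => Eb P (Cfun q) N K i) a ->
  Un_cv (fun K => Eb P (Cfun q) (S N) K i) a' ->
  g' <= g + a' - a.
Proof.
  intros Hg Hg' Ha Ha'.
  assert (Hshrink : forall K1 eta, 0 < eta ->
            (1 - eta) * Eb P (Cfun q) N K1 i <= g + a' - g').
  { intros K1 eta Heta.
    destruct (Eb_mass_approx (Cfun q) N i K1 eta (Cfun_nonneg q) Heta) as [K2 HK2].
    enough (g' <= g + a' - (1 - eta) * Eb P (Cfun q) N K1 i) by lra.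
    apply (cv_le_eventually _ _ _ Hg'); exists K2; intros K HK.
    pose proof (Eb_Qprod_extend N K i); specialize (HK2 K HK).
    pose proof (Eb_le_limit P Pmat_nonneg (Qprod q) N K i g (Qprod_nonneg q Hqpos) Hg).
    pose proof (Eb_le_limit P Pmat_nonneg (Cfun q) (S N) K i a' (Cfun_nonneg q) Ha').
    lra. }
  enough (a <= g + a' - g') by lra.
  apply (cv_le_eventually _ _ _ Ha); exists 0%nat; intros K1 _.
  apply le_of_forall_shrink; [apply Eb_nonneg; [exact Pmat_nonneg | apply Cfun_nonneg]|].
  intros; apply Hshrink; auto.
Qed.

Lemma f_value_exists Mi (HMi : forall N K, Eb P (Cfun q) N K i <= Mi) :
  exists l g, (forall N, Un_cv (fun K => Eb P (Qprod q) N K i) (g N)) /\ Un_cv g l.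
Proof.
  assert (HQM : forall N K, Eb P (Qprod q) N K i <= Mi).
  { intros N K; eapply Rle_trans; [|apply (HMi N K)].
    apply Eb_mono; [exact Pmat_nonneg|]; intros; apply Qprod_le_Cfun; auto. }
  set (a := fun N => proj1_sig (Eb_limit_exists P Pmat_nonneg (Cfun q) N i Mi
                                  (Cfun_nonneg q) (HMi N))).
  set (g := fun N => proj1_sig (Eb_limit_exists P Pmat_nonneg (Qprod q) N i Mi
                                  (Qprod_nonneg q Hqpos) (HQM N))).
  assert (Ha : forall N, Un_cv (fun K => Eb P (Cfun q) N K i) (a N))
    by (intro N; unfold a; destruct Eb_limit_exists; auto).
  assert (Hg : forall N, Un_cv (fun K => Eb P (Qprod q) N K i) (g N))
    by (intro N; unfold g; destruct Eb_limit_exists; auto).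
  clearbody a g.
  assert (Hagrow : Un_growing a) by (intro N; apply (Cfun_limit_growing N); auto).
  destruct (growing_bounded_cv a Mi Hagrow) as [A HA].
  { intro N; apply (cv_le_eventually _ _ _ (Ha N)); exists 0%nat; auto. }
  destruct (dominated_increments_cv g a A Hagrow HA) as [l Hl].
  - intro N; apply (cv_ge_eventually _ _ _ (Hg N)); exists 0%nat; intros.
    apply Eb_nonneg; [exact Pmat_nonneg | apply Qprod_nonneg; auto].
  - intro N; apply (Qprod_limit_step N); auto.
  - exists l, g; auto.
Qed.

End FixedStart.

End NormalizedKernel.

Lemma is_f_le Q q f i c : is_f Q q f ->
  (forall N, exists K0, forall K, (K0 <= K)%nat -> Eb (Pmat Q q) (Qprod q) N K i <= c) ->
  f i <= c.
Proof.
  intros Hf HB; destruct (Hf i) as [g [Hg Hl]].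
  apply (cv_le_eventually g); auto; exists 0%nat; intros N _.
  apply (cv_le_eventually _ _ _ (Hg N)); auto.
Qed.

Section Assertions.

Variables (Q : nat -> nat -> R) (q : nat -> R) (D : R).
Hypothesis HQnn : forall i j, 0 <= Q i j.
Hypothesis Hq : forall i, infinite_sum (fun j => Q i j) (q i).
Hypothesis Hqpos : forall i, 0 < q i.
Hypothesis HD : infinite_sum (dplus q) D.

Local Notation P := (Pmat Q q).

Lemma Eb_Qprod_le_Sfun N K i : Eb P (Qprod q) N K i <= Eb P (Sfun q) N K i.
Proof.
  apply Eb_mono; [exact (Pmat_nonneg Q q HQnn Hqpos)|]; intros.
  rewrite <- Cfun_Sfun by auto; apply Qprod_le_Cfun; auto.
Qed.

Lemma Sfun_le_sup_Lfun i M :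
  (forall j, Einf_le P (Lfun D j) i M) -> Einf_le P (Sfun q) i M.
Proof.
  intros HM N K.
  apply (Eb_Sfun_le_sup_Lfun q P D (Pmat_nonneg Q q HQnn Hqpos) HD).
  intro j; apply HM.
Qed.

Lemma condC_of_sup_Lfun :
  (forall i, exists M, forall j, Einf_le P (Lfun D j) i M) -> condC Q q.
Proof.
  intros Hex i; destruct (Hex i) as [M HM]; exists M; intros N K.
  unfold Eb; rewrite (boxsum_ext _ _ _ (fun xs => pw P i xs * Sfun q (i :: xs)))
    by (intros; rewrite Cfun_Sfun; auto).
  apply Sfun_le_sup_Lfun; auto.
Qed.

Lemma f_exists_le_sup_Lfun :
  (forall i, exists M, forall j, Einf_le P (Lfun D j) i M) ->
  exists f, is_f Q q f /\
    (forall i M, (forall j, Einf_le P (Lfun D j) i M) -> f i <= M).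
Proof.
  intro Hex.
  assert (Hval : forall i, exists l g,
            (forall N, Un_cv (fun K => Eb P (Qprod q) N K i) (g N)) /\ Un_cv g l).
  { intro i; destruct (condC_of_sup_Lfun Hex i) as [Mi HMi].
    exact (f_value_exists Q q HQnn Hq Hqpos i Mi HMi). }
  destruct (choice _ Hval) as [f Hf].
  exists f; split; [exact Hf|].
  intros i M HM; apply (is_f_le Q q f i M Hf); intro N; exists 0%nat; intros K _.
  eapply Rle_trans; [apply Eb_Qprod_le_Sfun | apply Sfun_le_sup_Lfun; auto].
Qed.

Lemma f_limsup_le_one f M (Hf : is_f Q q f)
  (Hstay : forall (N : nat) (eps : R), 0 < eps ->
      exists I : nat, forall i : nat, (I <= i)%nat ->
        forall Mh : nat, Efin_ge P (stay_above N) Mh i (1 - eps))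
  (HM : forall i, Einf_le P (Lfun D i) i M) eps : 0 < eps ->
  exists I : nat, forall i : nat, (I <= i)%nat -> f i <= 1 + eps.
Proof.
  intro Heps.
  pose proof (Pmat_nonneg Q q HQnn Hqpos) as HP.
  pose proof (Pmat_row Q q HQnn Hq Hqpos) as Hrow.
  pose proof (D_nonneg q D HD) as HD0.
  assert (HM1 : 1 <= M).
  { pose proof (HM 0%nat 0%nat 0%nat) as H0; unfold Eb in H0; cbn [boxsum pw] in H0.
    pose proof (Lfun_ge1 D 0 [0%nat] HD0); lra. }
  destruct HD0 as [HDpos | HDzero].
  - set (c := eps / (2 * M)).
    assert (Hc : 0 < c) by (unfold c; apply Rdiv_lt_0_compat; lra).
    assert (HMc : M * c = eps / 2) by (unfold c; field; lra).
    (* a tail of the series [sum delta^+] below [c D] *)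
    destruct (HD (c * D)) as [N0 HN0]; [apply Rmult_lt_0_compat; lra|].
    specialize (HN0 N0 (le_n N0)); unfold Rdist in HN0; apply Rabs_def2 in HN0.
    (* from far out, the chain stays above [N0] with probability [>= 1 - c] *)
    destruct (Hstay N0 (c / 2)) as [I HI]; [lra|].
    exists (max I (S N0)); intros i Hi; apply (is_f_le Q q f i _ Hf); intro N.
    destruct (HI i ltac:(lia) N (1 - c)) as [K0 HK0]; [lra|].
    exists K0; intros K HK; eapply Rle_trans; [apply Eb_Qprod_le_Sfun|].
    pose proof (Eb_Sfun_escape_bound P HP Hrow q D M HD ltac:(lra)
                  (fun j N K => HM j N K) N0 N K i ltac:(lia)) as Hbound.
    assert (HT : 1 - c <= Eb P (stay_above N0) N K i).
    { eapply Rle_trans; [exact HK0|].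
      apply Eb_monoK; auto; intro; apply stay_above_bounds. }
    assert (M * ((1 - Eb P (stay_above N0) N K i) * D + (D - sum_f_R0 (dplus q) N0))
            <= M * (2 * c * D)).
    { apply Rmult_le_compat_l; [lra|].
      assert ((1 - Eb P (stay_above N0) N K i) * D <= c * D)
        by (apply Rmult_le_compat_r; lra).
      lra. }
    apply Rmult_le_reg_l with D; auto; nra.
  - exists 0%nat; intros i _; apply (is_f_le Q q f i _ Hf); intro N.
    exists 0%nat; intros K _; eapply Rle_trans; [apply Eb_Qprod_le_Sfun|].
    rewrite (Eb_ext _ _ (fun _ => 1)) by (intros; apply Sfun_D0 with D; auto).
    pose proof (Eb_one_le _ HP Hrow N K i); lra.
Qed.

End Assertions.

Theorem proposition3 (Q : nat -> nat -> R) (q : nat -> R) (D : R)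
  (HQnn : forall i j, 0 <= Q i j)
  (Hq : forall i, infinite_sum (fun j => Q i j) (q i))
  (Hqpos : forall i, 0 < q i)
  (Hirr : irreducible Q)
  (HD : infinite_sum (fun j => dplus q j) D) :
  (* E_i exp(sum_j delta^+(j) l(j)) <= sup_j E_i e^{D l(j)} (in [0,oo]) *)
  (forall i M,
     (forall j, Einf_le (Pmat Q q) (Lfun D j) i M) ->
     Einf_le (Pmat Q q) (Sfun q) i M)
  /\
  (* if the RHS is finite for every i: (C) holds and f(i) <= RHS *)
  ((forall i, exists M, forall j, Einf_le (Pmat Q q) (Lfun D j) i M) ->
     condC Q q /\
     exists f, is_f Q q f /\
       (forall i M, (forall j, Einf_le (Pmat Q q) (Lfun D j) i M) -> f i <= M))
  /\
  (* in addition: escape to infinity and sup_i E_i e^{D l(i)} < oo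
     give limsup_i f(i) <= 1 *)
  ((forall i, exists M, forall j, Einf_le (Pmat Q q) (Lfun D j) i M) ->
   (forall (N : nat) (eps : R), 0 < eps ->
      exists I : nat, forall i : nat, (I <= i)%nat ->
        forall Mh : nat, Efin_ge (Pmat Q q) (stay_above N) Mh i (1 - eps)) ->
   (exists M, forall i, Einf_le (Pmat Q q) (Lfun D i) i M) ->
   exists f, is_f Q q f /\
     (forall eps, 0 < eps -> exists I : nat, forall i : nat, (I <= i)%nat ->
        f i <= 1 + eps)).
Proof.
  split; [|split].
  - exact (Sfun_le_sup_Lfun Q q D HQnn Hqpos HD).
  - intro Hex; split.
    + exact (condC_of_sup_Lfun Q q D HQnn Hqpos HD Hex).
    + exact (f_exists_le_sup_Lfun Q q D HQnn Hq Hqpos HD Hex).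
  - intros Hex Hstay [M HM].
    destruct (f_exists_le_sup_Lfun Q q D HQnn Hq Hqpos HD Hex) as [f [Hf _]].
    exists f; split; [exact Hf|].
    exact (f_limsup_le_one Q q D HQnn Hq Hqpos HD f M Hf Hstay HM).
Qed.
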